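(* Consider the free abelian group $\mathbb Z\Delta$ on $\Delta=\{D_1,\dots,D_6\}$ and the elements $\sigma_1=D_1+D_2-D_3$, $\sigma_2=-D_1+D_2+D_3-D_4-D_6$, $\sigma_3=-D_2+D_3+D_4-D_5$, $\sigma_4=-D_3+D_4+D_5$, $\sigma_5=-D_5+D_6$, with $\Sigma=\{\sigma_1,\dots,\sigma_5\}$. Let $\gamma\in\mathbb N\Sigma$ be a covering difference in $\mathbb N\Delta$ with $\sigma_5\in\mathrm{supp}_\Sigma\gamma$. Then either $\gamma=\sigma_5=-D_5+D_6$ or $\gamma=\sigma_2+\sigma_4+\sigma_5=-D_1+D_2$. Moreover every other covering difference $\gamma\in\mathbb N\Sigma$ (i.e. different from these two) satisfies $\mathrm{ht}(\gamma^+)=2$.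
   Context: For $D,E\in\mathbb Z\Delta$ write $D\le_\Sigma E$ if $E-D\in\mathbb N\Sigma$, and $D<_\Sigma E$ if moreover $D\neq E$. For $E,F\in\mathbb N\Delta$ with $E<_\Sigma F$, say $F$ covers $E$ if there is no $G\in\mathbb N\Delta$ with $E<_\Sigma G<_\Sigma F$; then $F-E$ is called a covering difference in $\mathbb N\Delta$. For $E=\sum_D k_DD\in\mathbb Z\Delta$, $E^+=\sum_{k_D>0}k_DD$, $E^-=E^+-E$, and $\mathrm{ht}(E)=\sum_D k_D$. For $\gamma=\sum a_i\sigma_i\in\mathbb N\Sigma$ (the $\sigma_i$ are linearly independent), $\mathrm{supp}_\Sigma\gamma=\{\sigma_i:a_i>0\}$. *)

From HB Require Import structures.
From mathcomp Require Import all_boot all_order all_algebra.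
Set Implicit Arguments. Unset Strict Implicit. Unset Printing Implicit Defensive.
Import Order.TTheory GRing.Theory Num.Theory.
Local Open Scope ring_scope.

(* Z Delta : free abelian group on Delta = {D_1,...,D_6}; D_k is index k-1. *)
Definition ZD := {ffun 'I_6 -> int}.

Definition NDelta (D : ZD) : Prop := forall i, 0 <= D i.

Definition sigma_table : seq (seq int) :=
  [:: [:: 1; 1; -1; 0; 0; 0];
      [:: -1; 1; 1; -1; 0; -1];
      [:: 0; -1; 1; 1; -1; 0];
      [:: 0; 0; -1; 1; 1; 0];
      [:: 0; 0; 0; 0; -1; 1]].

(* sigma i = sigma_{i+1} *)
Definition sigma (i : 'I_5) : ZD := [ffun j : 'I_6 => nth 0 (nth [::] sigma_table i) j].

Definition comb (a : 'I_5 -> nat) : ZD := \sum_(i < 5) sigma i *+ a i.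

Definition NSigma (g : ZD) : Prop := exists a : 'I_5 -> nat, g = comb a.

Definition leS (D E : ZD) : Prop := NSigma (E - D).
Definition ltS (D E : ZD) : Prop := leS D E /\ D <> E.

Definition covers (E F : ZD) : Prop :=
  NDelta E /\ NDelta F /\ ltS E F /\
  ~ (exists G : ZD, NDelta G /\ ltS E G /\ ltS G F).

Definition covering_difference (g : ZD) : Prop :=
  exists E F : ZD, covers E F /\ g = F - E.

(* sigma_i in supp_Sigma gamma (well-defined since the sigma_i are linearly
   independent: the coefficient vector is unique) *)
Definition in_supp (i : 'I_5) (g : ZD) : Prop :=
  exists a : 'I_5 -> nat, g = comb a /\ (0 < a i)%N.

Definition posp (E : ZD) : ZD := [ffun j => Num.max (E j) 0].
Definition ht (E : ZD) : int := \sum_(j < 6) E j.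

Definition s1 : 'I_5 := @Ordinal 5 1 isT.
Definition s3 : 'I_5 := @Ordinal 5 3 isT.
Definition s4 : 'I_5 := @Ordinal 5 4 isT.

From HB Require Import structures.
From mathcomp Require Import all_boot all_order all_algebra.
From mathcomp Require Import zify.
Import Order.TTheory GRing.Theory Num.Theory.
Local Open Scope ring_scope.

(* If F covers E and F - E = c + c' with c, c' in N Sigma both nonzero, then E + c
   must leave N Delta, so some coordinate satisfies c_j < min(0, (F - E)_j).
   Writing F - E = p sigma_1 + ... + t sigma_5, each admissible c yields a linear
   constraint on p, ..., t.  If t > 0, the witnesses sigma_5, F - E - sigma_5,
   sigma_4 and sigma_2 + sigma_4 + sigma_5 give s >= r + t, q >= t,
   q + r >= p + s and p >= q, which force t = 0 unless F - E is sigma_5 or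
   sigma_2 + sigma_4 + sigma_5.  If t = 0, one witness per support pattern shows
   p, q, r, s <= 1; the nonzero 0/1 vectors with ht(gamma^+) <> 2 all involve
   sigma_1 and are excluded by the witness sigma_1. *)

Lemma covers_obstruction (E F c : ZD) :
  covers E F -> NSigma c -> NSigma (F - E - c) -> c <> 0 -> c <> F - E ->
  exists j, c j < 0 /\ c j < (F - E) j.
Proof.
move=> [NE [NF [_ noG]]] Sc ScF c0 cF.
(* Otherwise E + c is an intermediate element: E_j + c_j >= min(E_j, F_j) >= 0. *)
case: (pickP (fun j => (c j < 0) && (c j < (F - E) j))) => [j /andP[]|inside].
  by exists j.
exfalso; apply: noG; exists (E + c); split; [|split; split].
- move=> j; move: (inside j) (NE j) (NF j); rewrite !ffunE /=; lia.
- by rewrite /leS addrAC subrr add0r.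
- by move=> /(congr1 (fun x => x - E)); rewrite addrAC subrr add0r => /esym.
- by rewrite /leS opprD addrA.
- by move=> cEF; apply: cF; rewrite -cEF addrAC subrr add0r.
Qed.

Definition sigma_comb (p q r s t : int) : ZD :=
  [ffun j : 'I_6 => nth 0
     [:: p - q; p + q - r; - p + q + r - s; - q + r + s; - r + s - t; - q + t] j].

Lemma comb_sigma_comb (a : 'I_5 -> nat) :
  comb a = sigma_comb (a ord0) (a s1) (a (Ordinal (isT : (2 < 5)%N))) (a s3) (a s4).
Proof.
set a' := fun i : 'I_5 => nth 0%N [:: a ord0; a s1; a (Ordinal (isT : (2 < 5)%N)); a s3; a s4] i.
have -> : comb a = comb a'.
  by apply: eq_bigr => -[[|[|[|[|[|i]]]]] Hi] // _; congr (_ *+ a _); exact: val_inj.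
apply/ffunP => j; rewrite /comb sum_ffunE !big_ord_recr big_ord0 /= !ffunMnE !ffunE.
case: j => [[|[|[|[|[|[|j]]]]]] Hj] //=; rewrite /a' /= ?mul0rn ?mulNrn ?natz; lia.
Qed.

Lemma sigma_comb_inj p q r s t p' q' r' s' t' :
  sigma_comb p q r s t = sigma_comb p' q' r' s' t' ->
  [/\ p = p', q = q', r = r', s = s' & t = t'].
Proof.
move=> eq_comb; have coord j := congr1 (fun f : ZD => f j) eq_comb.
move: (coord (inord 0)) (coord (inord 1)) (coord (inord 2)) (coord (inord 3))
  (coord (inord 4)) (coord (inord 5)); rewrite !ffunE !inordK //=.
by move=> *; split; lia.
Qed.

Lemma NSigma_sigma_comb (p q r s t : nat) : NSigma (sigma_comb p q r s t).
Proof. by exists (fun i => nth 0%N [:: p; q; r; s; t] i); rewrite comb_sigma_comb. Qed.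

Lemma sigma5E : sigma s4 = sigma_comb 0 0 0 0 1.
Proof. by apply/ffunP => -[[|[|[|[|[|[|j]]]]]] Hj]; rewrite !ffunE. Qed.

Lemma sigma245E : sigma s1 + sigma s3 + sigma s4 = sigma_comb 0 1 0 1 1.
Proof. by apply/ffunP => -[[|[|[|[|[|[|j]]]]]] Hj]; rewrite !ffunE. Qed.

Lemma in_supp_sigma5 (p q r s t : nat) : in_supp s4 (sigma_comb p q r s t) -> (0 < t)%N.
Proof.
move=> [a [/esym eq_comb t_pos]]; move: eq_comb; rewrite comb_sigma_comb.
by move=> /sigma_comb_inj [_ _ _ _ /eqP]; rewrite eqz_nat => /eqP <-.
Qed.

Section CoveringCoefficients.

Context {E F : ZD} {p q r s t : nat}.
Hypotheses (covEF : covers E F) (FE : F - E = sigma_comb p q r s t).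

Lemma covering_coefs_pos : (0 < p + q + r + s + t)%N.
Proof.
case: covEF => _ [_ [[_ EF] _]]; rewrite lt0n; apply/negP => /eqP sum0.
apply: EF; apply/esym/eqP; rewrite -subr_eq0 FE.
by apply/eqP/ffunP => -[[|[|[|[|[|[|j]]]]]] Hj]; rewrite !ffunE //=; lia.
Qed.

Lemma covering_obstruction (b0 b1 b2 b3 b4 : nat) :
  (b0 <= p)%N -> (b1 <= q)%N -> (b2 <= r)%N -> (b3 <= s)%N -> (b4 <= t)%N ->
  (0 < b0 + b1 + b2 + b3 + b4)%N -> (b0 + b1 + b2 + b3 + b4 < p + q + r + s + t)%N ->
  exists j, sigma_comb b0 b1 b2 b3 b4 j < 0 /\
            sigma_comb b0 b1 b2 b3 b4 j < sigma_comb p q r s t j.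
Proof.
move=> *; rewrite -FE; apply: covers_obstruction => //.
- exact: NSigma_sigma_comb.
- have -> : F - E - sigma_comb b0 b1 b2 b3 b4 =
            sigma_comb (p - b0)%N (q - b1)%N (r - b2)%N (s - b3)%N (t - b4)%N.
    by rewrite FE; apply/ffunP => -[[|[|[|[|[|[|j]]]]]] Hj]; rewrite !ffunE //=; lia.
  exact: NSigma_sigma_comb.
- have -> : (0 : ZD) = sigma_comb 0 0 0 0 0.
    by apply/ffunP => -[[|[|[|[|[|[|j]]]]]] Hj]; rewrite !ffunE.
  by move/sigma_comb_inj => [] *; lia.
- by rewrite FE => /sigma_comb_inj [] *; lia.
Qed.

Local Open Scope nat_scope.

(* Closes any goal that [lia] derives from the obstruction for the witness [b]. *)
Ltac by_witness b0 b1 b2 b3 b4 :=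
  have := covering_obstruction b0 b1 b2 b3 b4
    ltac:(lia) ltac:(lia) ltac:(lia) ltac:(lia) ltac:(lia) ltac:(lia) ltac:(lia);
  case=> -[[|[|[|[|[|[|//]]]]]] ?]; rewrite !ffunE /=; lia.

Lemma covering_sigma5_cases :
  0 < t -> (p, q, r, s, t) = (0, 0, 0, 0, 1) \/ (p, q, r, s, t) = (0, 1, 0, 1, 1).
Proof.
move=> t_pos.
have [single|big] : p + q + r + s + t = 1 \/ 1 < p + q + r + s + t by lia.
  by left; congr (_, _, _, _, _); lia.
have s_ge : r + t <= s by by_witness 0 0 0 0 1.
have q_ge : t <= q by by_witness p q r s (t - 1).
have qr_ge : p + s <= q + r by by_witness 0 0 0 1 0.
have [triple|many] : p + q + r + s + t = 3 \/ 3 < p + q + r + s + t by lia.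
  by right; congr (_, _, _, _, _); lia.
have : q <= p by by_witness 0 1 0 1 1.
lia.
Qed.

Lemma covering_sigma1_ineq : 0 < p -> 1 < p + q + r + s + t -> p + s <= q + r.
Proof. by move=> *; by_witness 1 0 0 0 0. Qed.

(* The sixteen cases are the supports of (p, q, r, s) in lexicographic order; the
   witness is the support itself unless that is not a covering difference. *)
Lemma covering_coefs_le1 : t = 0 -> p <= 1 /\ q <= 1 /\ r <= 1 /\ s <= 1.
Proof.
move=> t0.
have [//|big] : (p <= 1 /\ q <= 1 /\ r <= 1 /\ s <= 1) \/ (1 < p \/ 1 < q \/ 1 < r \/ 1 < s)
  by lia.
exfalso.
(have [p0|p1] : p = 0 \/ 0 < p by lia); (have [q0|q1] : q = 0 \/ 0 < q by lia);
(have [r0|r1] : r = 0 \/ 0 < r by lia); (have [s0|s1] : s = 0 \/ 0 < s by lia);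
[ lia
| by_witness 0 0 0 1 0 | by_witness 0 0 1 0 0 | by_witness 0 0 1 1 0
| by_witness 0 1 0 0 0 | by_witness 0 1 0 1 0 | by_witness 0 1 1 0 0
| by_witness 0 1 0 1 0 | by_witness 1 0 0 0 0 | by_witness 0 0 0 1 0
| by_witness 1 0 1 0 0 | by_witness p q (r - 1) (s - 1) t
| by_witness 1 1 0 0 0 | by_witness p (q - 1) r (s - 1) t
| by_witness 1 0 1 0 0 | by_witness 1 1 1 1 0 ].
Qed.

End CoveringCoefficients.

Lemma ht_posp_sigma_comb (p q r s t : int) :
  ht (posp (sigma_comb p q r s t)) =
  Num.max (p - q) 0 + Num.max (p + q - r) 0 + Num.max (- p + q + r - s) 0 +
  Num.max (- q + r + s) 0 + Num.max (- r + s - t) 0 + Num.max (- q + t) 0.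
Proof. by rewrite /ht !big_ord_recr big_ord0 /= !ffunE /= add0r. Qed.

Theorem lemma2p7 (g : ZD) :
  NSigma g -> covering_difference g ->
  (in_supp s4 g -> g = sigma s4 \/ g = sigma s1 + sigma s3 + sigma s4) /\
  (g <> sigma s4 -> g <> sigma s1 + sigma s3 + sigma s4 -> ht (posp g) = 2).
Proof.
move=> [a ->] [E [F [covEF FE]]]; move: FE; rewrite comb_sigma_comb.
move: (a ord0) (a s1) (a (Ordinal (isT : (2 < 5)%N))) (a s3) (a s4) => p q r s t /esym FE.
split.
  move=> /in_supp_sigma5 t_pos.
  case: (covering_sigma5_cases covEF FE t_pos) => -[-> -> -> -> ->].
    by left; rewrite sigma5E.
  by right; rewrite sigma245E.
move=> not_sigma5 not_sigma245.
have t0 : t = 0%N.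
  case: (posnP t) => // t_pos; exfalso.
  have [eq5|eq245] := covering_sigma5_cases covEF FE t_pos.
    by apply: not_sigma5; case: eq5 => -> -> -> -> ->; rewrite sigma5E.
  by apply: not_sigma245; case: eq245 => -> -> -> -> ->; rewrite sigma245E.
have [? [? [? ?]]] := covering_coefs_le1 covEF FE t0.
have := covering_coefs_pos covEF FE; have := covering_sigma1_ineq covEF FE.
by rewrite t0 ht_posp_sigma_comb; lia.
Qed.
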